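(* Every loopless $3$-irregular subcubic multigraph has a $(1^2,2^2)$-packing edge-coloring.
   Context: A multigraph may have parallel edges; the degree of a vertex counts edges with multiplicity. A multigraph is subcubic if every vertex has degree at most $3$. A multigraph is $3$-irregular if no two adjacent vertices both have degree $3$. The distance between two edges is the distance between the corresponding vertices in the line graph (so two edges sharing an endpoint, including parallel edges, are at distance $1$). A $(1^2,2^2)$-packing edge-coloring of $G$ is a partition of $E(G)$ into four sets $E_1,E_2,E_3,E_4$ such that any two distinct edges in $E_1$, or any two in $E_2$, are at distance at least $2$ (i.e. $E_1,E_2$ are matchings), and any two distinct edges in $E_3$, or any two in $E_4$, are at distance at least $3$ (i.e. $E_3,E_4$ are induced matchings). *)

From mathcomp Require Import all_boot.
Set Implicit Arguments. Unset Strict Implicit. Unset Printing Implicit Defensive.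

(* A finite multigraph: vertex type V, edge type E (parallel edges are
   distinct elements of E with the same endpoints), endpoint map ends. *)
Section Multigraph.
Variables (V E : finType) (ends : E -> V * V).

Definition incident (v : V) (e : E) : bool := (v == (ends e).1) || (v == (ends e).2).

Definition loopless : Prop := forall e, (ends e).1 != (ends e).2.

(* degree with multiplicity (for loopless graphs each incident edge counts once) *)
Definition deg (v : V) : nat := #|[set e | incident v e]|.

Definition subcubic : Prop := forall v, deg v <= 3.

Definition adjacent (u v : V) : bool := [exists e, (ends e == (u, v)) || (ends e == (v, u))].

Definition three_irregular : Prop :=
  forall u v, adjacent u v -> ~ (deg u = 3 /\ deg v = 3).

Definition edge_adj (e f : E) : bool :=
  (e != f) && [exists v, incident v e && incident v f].

Definition is_matching (M : {set E}) : Prop :=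
  forall e f, e \in M -> f \in M -> e != f -> ~~ edge_adj e f.

Definition is_induced_matching (M : {set E}) : Prop :=
  forall e f, e \in M -> f \in M -> e != f ->
    ~~ edge_adj e f /\ ~ (exists g, edge_adj e g /\ edge_adj g f).

(* a (1^2,2^2)-packing edge-coloring: a map c : E -> 'I_4 (i.e. a partition
   of E into E_0..E_3), color classes 0,1 matchings, 2,3 induced matchings *)
Definition packing_1122 (c : E -> 'I_4) : Prop :=
  is_matching [set e | val (c e) == 0] /\
  is_matching [set e | val (c e) == 1] /\
  is_induced_matching [set e | val (c e) == 2] /\
  is_induced_matching [set e | val (c e) == 3].

End Multigraph.

From Pilot Require Import Defs.
From mathcomp Require Import all_boot zify.
Set Implicit Arguments. Unset Strict Implicit. Unset Printing Implicit Defensive.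

(* Choose a bipartition [side] of the vertices with the largest cut and, among
   those, the fewest bad vertices: degree-3 vertices all of whose edges cross
   the cut. Uncut edges then form a matching, and every neighbour of a bad vertex
   has degree at most 2. Every bad vertex chooses one of its edges; the uncut
   edges and the chosen edges, coloured 2 or 3 by the side of an endpoint or by
   a second extremal labelling [tiebreak], form two induced matchings. The
   remaining edges cross the cut and have maximum degree 2, so a Kempe-chain
   argument colours them properly with 0 and 1. *)


Lemma mem_card_le2 (T : finType) (A : {set T}) x y z :
  #|A| <= 2 -> x \in A -> y \in A -> z \in A -> x != y -> z = x \/ z = y.
Proof.
move=> A2 xA yA zA xy.
have [->|zx] := eqVneq z x; first by left.
have [->|zy] := eqVneq z y; first by right.
have : #|x |: (y |: [set z])| <= #|A|.
  by apply/subset_leq_card/subsetP => w; rewrite !inE => /orP[|/orP[]]/eqP->.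
rewrite !cardsU1 cards1 !inE (negbTE xy) ![x == z]eq_sym ![y == z]eq_sym (negbTE zx) zy.
by move/leq_trans/(_ A2).
Qed.

Section Multigraph.
Variables (V E : finType) (ends : E -> V * V).
Hypothesis ends_loopless : loopless ends.
Local Notation inc := (incident ends).

Definition other_end (e : E) (v : V) : V :=
  if (ends e).1 == v then (ends e).2 else (ends e).1.

Lemma incident_ends1 e : inc (ends e).1 e.
Proof. by rewrite /incident eqxx. Qed.

Lemma incident_ends2 e : inc (ends e).2 e.
Proof. by rewrite /incident eqxx orbT. Qed.

Lemma incident_other_end u e : inc u e -> inc (other_end e u) e.
Proof. by rewrite /other_end; case: ifP; rewrite ?incident_ends1 ?incident_ends2. Qed.

Lemma other_end_neq u e : inc u e -> other_end e u != u.
Proof.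
have := ends_loopless e; rewrite /other_end /incident.
case: (ends e) => a b /= ab /orP[]/eqP->; first by rewrite eqxx eq_sym.
by rewrite (negbTE ab).
Qed.

Lemma incident2P u v e : inc u e -> inc v e -> v = u \/ v = other_end e u.
Proof.
rewrite /other_end /incident; case: (ends e) => a b /=.
by case/orP=> /eqP-> /orP[]/eqP->; rewrite ?eqxx; try case: eqP; auto.
Qed.

Lemma other_end_eq u v e : inc u e -> inc v e -> u != v -> v = other_end e u.
Proof. by move=> ue ve; case: (incident2P ue ve) => // ->; rewrite eqxx. Qed.

Lemma other_endK u e : inc u e -> other_end e (other_end e u) = u.
Proof.
move=> ue; rewrite -(other_end_eq (incident_other_end ue) ue) //.
by rewrite other_end_neq.
Qed.

Lemma adjacent_other_end u e : inc u e -> adjacent ends u (other_end e u).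
Proof.
move=> ue; apply/existsP; exists e; move: ue; rewrite /other_end /incident.
case: (ends e) => a b /= /orP[]/eqP->; first by rewrite eqxx /= eqxx.
by case: (a =P b) => [->|_]; rewrite eqxx ?orbT.
Qed.

Lemma edge_adjP e f :
  reflect (e <> f /\ exists v, inc v e /\ inc v f) (edge_adj ends e f).
Proof.
apply: (iffP andP) => [[/eqP ef /existsP[v /andP[ve vf]]]|[ef [v [ve vf]]]].
  by split=> //; exists v.
by split; [apply/eqP | apply/existsP; exists v; rewrite ve vf].
Qed.

Lemma packing_1122_of_local (c : E -> 'I_4) :
  (forall u f f', inc u f -> inc u f' -> f != f' -> c f != c f') ->
  (forall g a b f f', inc a g -> inc b g -> a != b -> f != g -> f' != g ->
     f != f' -> inc a f -> inc b f' -> c f = c f' -> val (c f) < 2) ->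
  packing_1122 ends c.
Proof.
move=> proper dist2.
have matching k : is_matching ends [set e | val (c e) == k].
  move=> e f; rewrite !inE => /eqP ce /eqP cf ef; apply/negP => /edge_adjP[_ [v [ve vf]]].
  by move: (proper v e f ve vf ef); rewrite -val_eqE ce cf eqxx.
have induced k : 2 <= k -> is_induced_matching ends [set e | val (c e) == k].
  move=> k2 e f eM fM ef; split; first exact: matching eM fM ef.
  move: eM fM; rewrite !inE => /eqP ce /eqP cf.
  case=> g [/edge_adjP[eg [a [ae ag]]] /edge_adjP[gf [b [bg bf]]]].
  have cef : c e = c f by apply: val_inj; rewrite ce cf.
  have [ab|ab] := eqVneq a b.
    by subst b; move: (proper a e f ae bf ef); rewrite cef eqxx.
  have fg : f != g by apply/eqP => fg; exact: gf (esym fg).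
  by have := dist2 g a b e f ag bg ab (introN eqP eg) fg ef ae bf cef; rewrite ce ltnNge k2.
by split; [|split; [|split]]; [apply: matching | apply: matching | apply: induced..].
Qed.

End Multigraph.

Section DirectedPaths.
Variables (T : finType) (D : rel T).

Lemma connect_last x y : connect D x y -> y != x -> exists2 z, connect D x z & D z y.
Proof.
case/connectP => s; elim/last_ind: s => [|s z _] /=; first by move=> _ ->; rewrite eqxx.
rewrite rcons_path last_rcons => /andP[xs Dz] -> _.
by exists (last x s) => //; apply/connectP; exists s.
Qed.

Lemma connect_from_source q x :
  (forall a b c, D a c -> D b c -> a = b) -> (forall a, ~~ D a q) ->
  connect [rel a b | D a b || D b a] q x -> connect D q x.
Proof.
move=> Dinj q_source; set R := [rel a b | _].
suff closedR : closed R (connect D q).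
  by move/(closed_connect closedR); rewrite !inE connect0 => <-.
have step a b : R a b -> connect D q a -> connect D q b.
  case/orP=> [Dab|Dba] qa; first exact: connect_trans qa (connect1 Dab).
  have [aq|] := eqVneq a q; first by move: (q_source b); rewrite -aq Dba.
  by case/(connect_last qa) => z qz /(Dinj _ _ _ Dba) ->.
move=> a b Rab; apply/idP/idP; first exact: step.
by apply: step; rewrite /R /= orbC.
Qed.

End DirectedPaths.

Section BipartiteEdgeColoring.
Variables (V E : finType) (ends : E -> V * V) (side : V -> bool).
Local Notation inc := (incident ends).
Local Notation other_end := (other_end ends).

Definition proper_on (P : {set E}) (c : E -> bool) :=
  forall u f f', f \in P -> f' \in P -> inc u f -> inc u f' -> f != f' -> c f != c f'.

Definition crossing e := side (ends e).1 != side (ends e).2.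

Lemma side_other_end e z : crossing e -> inc z e -> side (other_end e z) = ~~ side z.
Proof.
rewrite /crossing /other_end /incident.
case: (ends e) => a b /= sab /orP[]/eqP->.
  by rewrite eqxx; move: sab; case: (side a); case: (side b).
case: (a =P b) => [ab|_]; first by move: sab; rewrite ab eqxx.
by move: sab; case: (side a); case: (side b).
Qed.

Lemma crossing_side_inj e u v : crossing e -> inc u e -> inc v e -> side u = side v -> u = v.
Proof.
move=> ce ue ve; case: (incident2P ue ve) => [->|->] //.
by rewrite (side_other_end ce ue); case: (side u).
Qed.

Lemma incident_le2 (P : {set E}) u f g h : #|[set e in P | inc u e]| <= 2 ->
  f \in P -> g \in P -> h \in P -> inc u f -> inc u g -> inc u h -> f != g -> h = f \/ h = g.
Proof. by move=> Pu fP gP hP uf ug uh; apply: (mem_card_le2 Pu); rewrite inE ?fP ?gP ?hP. Qed.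

Lemma proper_on_setU1 P e c : proper_on P c ->
  {in P &, forall f g, inc (ends e).1 f || inc (ends e).2 f ->
                       inc (ends e).1 g || inc (ends e).2 g -> c f = c g} ->
  exists c', proper_on (e |: P) c'.
Proof.
move=> cP mono.
pose c0 := if [pick f in P | inc (ends e).1 f || inc (ends e).2 f] is Some f then ~~ c f else false.
have free f : f \in P -> inc (ends e).1 f || inc (ends e).2 f -> c f != c0.
  move=> fP fe; rewrite /c0; case: pickP => [g /andP[gP ge]|/(_ f)]; last by rewrite /= fP fe.
  by rewrite (mono f g) //; case: (c g).
exists (fun f => if f == e then c0 else c f) => u f f'; rewrite !inE.
have free_at g : g \in P -> inc u e -> inc u g -> c g != c0.
  move=> gP ue ug; apply: free => //.
  by move: ue; rewrite {1}/incident => /orP[]/eqP <-; rewrite ug ?orbT.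
case: (eqVneq f e) => [->|fe]; case: (eqVneq f' e) => [->|f'e] //= fP f'P uf uf' ff'.
- by rewrite eq_sym free_at.
- by rewrite free_at.
- exact: cP fP f'P uf uf' ff'.
Qed.

Section Kempe.
Variables (P : {set E}) (c : E -> bool).
Hypotheses (P_crossing : {in P, forall e, crossing e})
           (P_deg : forall u, #|[set e in P | inc u e]| <= 2)
           (cP : proper_on P c).

Let touching := [rel f g | [&& f \in P, g \in P, f != g & [exists u, inc u f && inc u g]]].

Variables (x y : V) (p q : E).
Hypotheses (pP : p \in P) (qP : q \in P) (xp : inc x p) (yq : inc y q)
           (only_p : {in P, forall f, inc x f -> f = p})
           (only_q : {in P, forall f, inc y f -> f = q})
           (sxy : side x != side y) (cpq : c p != c q).

(* Call the endpoint of [f] of side [c f (+) b] its head. Of two touching edges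
   exactly one has its head at the shared vertex, so they are [D]-related one way
   or the other; an edge has a single head, hence at most one [D]-predecessor, and
   [p], [q] have none. So the component of [q] is a [D]-path from [q] and cannot
   reach [p]. *)
Lemma kempe_chain_avoids : ~~ connect touching q p.
Proof.
have [b sy] : exists b, side y == c q (+) b by exists (c q (+) side y); rewrite addKb.
pose D := [rel f g | [&& f \in P, g \in P, f != g & [exists u,
  [&& inc u f, inc u g, side u != c f (+) b & side u == c g (+) b]]]].
have head_uniq g u v : g \in P -> inc u g -> inc v g ->
    side u == c g (+) b -> side v == c g (+) b -> u = v.
  move=> gP ug vg /eqP su /eqP sv; apply: crossing_side_inj (P_crossing gP) ug vg _.
  by rewrite su sv.
have source z r : r \in P -> inc z r -> {in P, forall f, inc z f -> f = r} ->
    side z == c r (+) b -> forall a, ~~ D a r.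
  move=> rP zr only_r sz a; apply/negP => /and4P[aP _ ar /existsP[u /and4P[ua ur _ su]]].
  have uz := head_uniq r u z rP ur zr su sz.
  by move: ar; rewrite (only_r a aP) ?eqxx // -uz.
have Dinj a a' g : D a g -> D a' g -> a = a'.
  move=> /and4P[aP gP ag /existsP[u /and4P[ua ug _ su]]].
  move=> /and4P[a'P _ a'g /existsP[u' /and4P[ua' u'g _ su']]].
  have uu' := head_uniq g u u' gP ug u'g su su'; subst u'.
  case: (incident_le2 (P_deg u) aP gP a'P ua ug ua' ag) => // a'g'.
  by move: a'g; rewrite a'g' eqxx.
have touching_D f g : touching f g -> D f g || D g f.
  case/and4P=> fP gP fg /existsP[u /andP[uf ug]]; rewrite /= fP gP fg eq_sym fg /=.
  have := cP fP gP uf ug fg.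
  case: (side u =P c g (+) b) => [su|/eqP su] cfg.
    apply/orP; left; apply/existsP; exists u.
    by rewrite uf ug su eqxx (inj_eq (@addIb b)) eq_sym cfg.
  apply/orP; right; apply/existsP; exists u; rewrite uf ug su /=.
  by move: su cfg; case: (side u); case: (c f); case: (c g); case: (b).
apply/negP => qp.
have qDp : connect D q p.
  apply: connect_from_source Dinj (source y q qP yq only_q sy) _.
  by apply: connect_sub qp => f g /touching_D Dfg; apply: connect1.
have pq : p != q by apply: contraNneq _ cpq => ->.
have [z _ Dzp] := connect_last qDp pq.
have sx : side x == c p (+) b.
  by move: sxy cpq sy; case: (side x); case: (side y); case: (c p); case: (c q); case: (b).
by move: (source x p pP xp only_p sx z) Dzp => /negP.
Qed.

Lemma kempe_swap : exists2 c', proper_on P c' & c' p = c' q.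
Proof.
have touching_sym : connect_sym touching.
  apply: sym_connect_sym => f g; rewrite /= andbCA eq_sym.
  by congr [&& _, _, _ & _]; apply/existsP/existsP => -[u /andP[uf ug]]; exists u; rewrite uf ug.
exists (fun f => c f (+) connect touching q f).
  move=> u f f' fP f'P uf uf' ff'.
  have ff'_touch : touching f f' by rewrite /= fP f'P ff'; apply/existsP; exists u; rewrite uf uf'.
  rewrite (same_connect1r touching_sym ff'_touch).
  by move: (cP fP f'P uf uf' ff'); case: (c f); case: (c f'); case: (connect touching q f').
rewrite (negbTE kempe_chain_avoids) connect0.
by move: cpq; case: (c p); case: (c q).
Qed.

End Kempe.

Lemma card_incident_subset (P Q : {set E}) u :
  Q \subset P -> #|[set e in Q | inc u e]| <= #|[set e in P | inc u e]|.
Proof.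
by move=> QP; apply/subset_leq_card/subsetP => f; rewrite !inE => /andP[/(subsetP QP) -> ->].
Qed.

Lemma proper_on_setD1 (P : {set E}) e c :
  {in P, forall e, crossing e} -> (forall u, #|[set e in P | inc u e]| <= 2) ->
  e \in P -> proper_on (P :\ e) c -> exists c', proper_on P c'.
Proof.
move=> P_crossing P_deg eP cP'; set P' := P :\ e in cP' *.
have P'P : P' \subset P by apply: subsetDl.
have P'_crossing : {in P', forall f, crossing f}.
  by move=> f /(subsetP P'P); apply: P_crossing.
have P'_deg u : #|[set f in P' | inc u f]| <= 2.
  exact: leq_trans (card_incident_subset u P'P) (P_deg u).
set x := (ends e).1; set y := (ends e).2.
have at_end z f g : inc z e -> f \in P' -> g \in P' -> inc z f -> inc z g -> f = g.
  move=> ze; rewrite !inE => /andP[fe fP] /andP[ge gP] zf zg.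
  case: (incident_le2 (P_deg z) eP fP gP ze zf zg) => [||->//]; first by rewrite eq_sym.
  by move=> ge'; move: ge; rewrite ge' eqxx.
have xe : inc x e := incident_ends1 ends e.
have ye : inc y e := incident_ends2 ends e.
rewrite -(setD1K eP).
case: (pickP [pred pq : E * E | [&& pq.1 \in P', pq.2 \in P', inc x pq.1, inc y pq.2
                                   & c pq.1 != c pq.2]]) => [[p q] /= /and5P[pP qP xp yq cpq]|none].
  have [c' c'P' c'pq] := kempe_swap P'_crossing P'_deg cP' pP qP xp yq
    (fun f fP xf => at_end x f p xe fP pP xf xp) (fun f fP yf => at_end y f q ye fP qP yf yq)
    (P_crossing e eP) cpq.
  apply: proper_on_setU1 c'P' _ => f g fP gP /orP[xf|yf] /orP[xg|yg].
  - by rewrite (at_end x f g).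
  - by rewrite (at_end x f p) // (at_end y g q).
  - by rewrite (at_end y f q) // (at_end x g p).
  - by rewrite (at_end y f g).
apply: proper_on_setU1 cP' _ => f g fP gP /orP[xf|yf] /orP[xg|yg].
- by rewrite (at_end x f g).
- by apply/eqP; move: (none (f, g)); rewrite /= fP gP xf yg => /negbFE.
- by apply/esym/eqP; move: (none (g, f)); rewrite /= fP gP xg yf => /negbFE.
- by rewrite (at_end y f g).
Qed.

Lemma bipartite_deg2_edge_coloring (P : {set E}) :
  {in P, forall e, crossing e} -> (forall u, #|[set e in P | inc u e]| <= 2) ->
  exists c, proper_on P c.
Proof.
have [n] := ubnP #|P|; elim: n P => // n IH P ltPn P_crossing P_deg.
have [->|[e eP]] := set_0Vmem P; first by exists xpred0 => u f f'; rewrite inE.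
have [|f fP|u|c cP'] := IH (P :\ e); last exact: proper_on_setD1 P_crossing P_deg eP cP'.
- by rewrite (cardsD1 e P) eP in ltPn.
- by apply: P_crossing; apply: subsetP fP; apply: subsetDl.
- exact: leq_trans (card_incident_subset u (subsetDl P _)) (P_deg u).
Qed.

End BipartiteEdgeColoring.

Section Packing.
Variables (V E : finType) (ends : E -> V * V).
Hypotheses (ends_loopless : loopless ends) (ends_subcubic : subcubic ends)
           (ends_irregular : three_irregular ends).
Local Notation inc := (incident ends).
Local Notation deg := (deg ends).
Local Notation other_end := (other_end ends).
Local Notation crossing := (crossing ends).

Lemma deg_other_end_le2 v e : deg v = 3 -> inc v e -> deg (other_end e v) <= 2.
Proof.
move=> dv ve; rewrite leqNgt; apply/negP => d3.
apply: ends_irregular (adjacent_other_end ve) _; split=> //.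
by apply/eqP; rewrite eqn_leq ends_subcubic.
Qed.

Lemma deg_le2_edges u h g k :
  deg u <= 2 -> inc u h -> inc u g -> h != g -> inc u k -> k = h \/ k = g.
Proof. by move=> du uh ug hg uk; apply: (mem_card_le2 du); rewrite ?inE. Qed.

Definition ncut (s : {ffun V -> bool}) := #|[set e | crossing s e]|.

Definition fully_crossed (s : {ffun V -> bool}) v :=
  (deg v == 3) && [forall e, inc v e ==> crossing s e].

Definition nfully_crossed s := #|[set v | fully_crossed s v]|.

Definition flip (s : {ffun V -> bool}) x : {ffun V -> bool} := [ffun u => (u == x) (+) s u].

Lemma crossing_flip s x e : crossing (flip s x) e = crossing s e (+) inc x e.
Proof.
rewrite /crossing /incident !ffunE; have := ends_loopless e.
case: (ends e) => a b /= ab; rewrite ![x == _]eq_sym.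
case: (a =P x) => [ax|_]; case: (b =P x) => [bx|_] /=.
- by move: ab; rewrite ax bx eqxx.
all: by case: (s a); case: (s b).
Qed.

Lemma deg_split s x :
  #|[set e | inc x e && crossing s e]| + #|[set e | inc x e && ~~ crossing s e]| = deg x.
Proof.
rewrite /Defs.deg -(cardsID [set e | crossing s e] [set e | inc x e]).
by congr (_ + _); apply: eq_card => e; rewrite !inE // andbC.
Qed.

Lemma ncut_split s x :
  ncut s = #|[set e | crossing s e && ~~ inc x e]| + #|[set e | inc x e && crossing s e]|.
Proof.
rewrite /ncut -(cardsID [set e | inc x e] [set e | crossing s e]) addnC.
by congr (_ + _); apply: eq_card => e; rewrite !inE // andbC.
Qed.

Lemma ncut_flip s x : ncut (flip s x) + #|[set e | inc x e && crossing s e]| =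
                      ncut s + #|[set e | inc x e && ~~ crossing s e]|.
Proof.
rewrite !(ncut_split _ x).
have -> : [set e | crossing (flip s x) e && ~~ inc x e] = [set e | crossing s e && ~~ inc x e].
  by apply/setP => e; rewrite !inE crossing_flip; case: (inc x e); rewrite ?andbF ?addbF.
have -> : [set e | inc x e && crossing (flip s x) e] = [set e | inc x e && ~~ crossing s e].
  by apply/setP => e; rewrite !inE crossing_flip; case: (inc x e); rewrite ?addbT.
by rewrite addnAC -!addnA [X in _ + X]addnC.
Qed.

Definition max_cut := [arg max_(s > [ffun=> false]) ncut s].

Definition side := [arg min_(s < max_cut | ncut s == ncut max_cut) nfully_crossed s].

Lemma ncut_side s : ncut s <= ncut side.
Proof.
rewrite /side; case: arg_minnP => // t /eqP -> _.
by rewrite /max_cut; case: arg_maxnP => // m _; apply.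
Qed.

Lemma nfully_crossed_side s : ncut s = ncut side -> nfully_crossed side <= nfully_crossed s.
Proof.
rewrite /side; case: arg_minnP => // t /eqP tmax tmin st.
by apply: tmin; rewrite st tmax.
Qed.

Local Notation cut := (crossing side).

Definition bad v := fully_crossed side v.

Lemma bad_deg v : bad v -> deg v = 3.
Proof. by case/andP=> /eqP. Qed.

Lemma bad_cut v e : bad v -> inc v e -> cut e.
Proof. by case/andP=> _ /forallP/(_ e)/implyP. Qed.

Lemma other_end_not_bad v e : bad v -> inc v e -> ~~ bad (other_end e v).
Proof.
move=> bv ve; apply/negP => /bad_deg d3.
by have := deg_other_end_le2 (bad_deg bv) ve; rewrite d3.
Qed.

Lemma uncut_not_bad u e : ~~ cut e -> inc u e -> ~~ bad u.
Proof. by move=> ne ue; apply: contraNN ne => bu; apply: bad_cut bu ue. Qed.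

(* Otherwise flipping [u] would enlarge the cut. *)
Lemma uncut_matching u f f' : inc u f -> inc u f' -> ~~ cut f -> ~~ cut f' -> f = f'.
Proof.
move=> uf uf' nf nf'; apply/eqP/negPn/negP => ff'.
have : #|[set f; f']| <= #|[set e | inc u e && ~~ cut e]|.
  apply/subset_leq_card/subsetP => e.
  by rewrite !inE => /orP[]/eqP->; rewrite ?uf ?nf ?uf' ?nf'.
rewrite cards2 ff' /=.
have := ncut_side (flip side u); have := ncut_flip side u.
have := deg_split side u; have := ends_subcubic u.
set a := #|[set e | inc u e & cut e]|; set b := #|[set e | inc u e & ~~ cut e]|; lia.
Qed.

(* Otherwise flipping [other_end e v] would keep the cut size and make [v] not bad. *)
Lemma uncut_partner_deg3 v e f : bad v -> inc v e -> inc (other_end e v) f -> ~~ cut f ->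
  deg (other_end f (other_end e v)) = 3.
Proof.
move=> bv ve; set x := other_end e v => xf nf; set y := other_end f x.
apply/eqP/negPn/negP => ny.
have dx : deg x <= 2 := deg_other_end_le2 (bad_deg bv) ve.
have ce : cut e := bad_cut bv ve.
have fe : f != e by apply: contraNneq nf => ->.
have xe : inc x e := incident_other_end ve.
have x_edges g : inc x g -> g = f \/ g = e := deg_le2_edges dx xf xe fe.
set s := flip side x.
have same_ncut : ncut s = ncut side.
  have := ncut_flip side x.
  have -> : [set g | inc x g && cut g] = [set e].
    apply/setP => g; rewrite !inE; apply/andP/eqP => [[xg cg]|->]; last by rewrite xe ce.
    by case: (x_edges g xg) => // gf; move: cg; rewrite gf (negbTE nf).
  have -> : [set g | inc x g && ~~ cut g] = [set f].
    apply/setP => g; rewrite !inE; apply/andP/eqP => [[xg cg]|->]; last by rewrite xf nf.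
    by case: (x_edges g xg) => // ge; move: cg; rewrite ge ce.
  by rewrite !cards1 => /addIn.
have fewer : nfully_crossed s < nfully_crossed side.
  apply/proper_card/properP; split.
    apply/subsetP => u; rewrite !inE => /andP[du /forallP cu]; rewrite /fully_crossed du /=.
    have [->|uv] := eqVneq u v; first by case/andP: bv.
    apply/forallP => g; apply/implyP => ug; have := implyP (cu g) ug.
    rewrite crossing_flip; case xg: (inc x g); last by rewrite addbF.
    have dx3 : deg x != 3 by rewrite neq_ltn (leq_ltn_trans dx).
    case: (x_edges g xg) => gg; subst g.
      by case: (incident2P xf ug) => uu; move: du; rewrite uu ?(negbTE dx3) ?(negbTE ny).
    by case: (incident2P ve ug) => uu; move: du uv; rewrite uu ?eqxx ?(negbTE dx3).
  exists v; rewrite !inE //; apply/nandP; right; rewrite negb_forall; apply/existsP; exists e.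
  by rewrite negb_imply ve crossing_flip ce xe.
by have := nfully_crossed_side same_ncut; rewrite leqNgt fewer.
Qed.

Definition meets_uncut v e :=
  [&& bad v, inc v e & [exists f, inc (other_end e v) f && ~~ cut f]].

Definition linked v e w := [&& bad v, inc v e, bad w, w != v &
  [exists f, [&& f != e, inc (other_end e v) f & other_end f (other_end e v) == w]]].

Definition free v e :=
  [&& bad v, inc v e, ~~ meets_uncut v e & ~~ [exists w, linked v e w]].

Definition bad_color (t : {ffun V -> bool}) v :=
  if [exists e, meets_uncut v e] then side v
  else if [exists e, free v e] then ~~ side v else t v.

Definition nsplit t := #|[set e | [exists v, exists w,
  linked v e w && (bad_color t v != bad_color t w)]]|.

Definition tiebreak := [arg max_(t > [ffun=> false]) nsplit t].

Local Notation color := (bad_color tiebreak).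

Definition split_link v e := [exists w, linked v e w && (color v != color w)].

Lemma nsplit_tiebreak t : nsplit t <= nsplit tiebreak.
Proof. by rewrite /tiebreak; case: arg_maxnP => // t0 _; apply. Qed.

Lemma linked_sym v e w : linked v e w -> exists f, linked w f v.
Proof.
case/and5P=> bv ve bw wv /existsP[f /and3P[fe xf /eqP yw]].
have wf : inc w f by rewrite -yw; apply: incident_other_end.
have xw : other_end f w = other_end e v by rewrite -yw other_endK.
exists f; apply/and5P; split => //; first by rewrite eq_sym.
by apply/existsP; exists e; rewrite xw eq_sym fe incident_other_end //= other_endK.
Qed.

Lemma linked_bad v e w : linked v e w -> bad v /\ inc v e.
Proof. by case/and5P. Qed.

Lemma bad_incident v : bad v -> exists e, inc v e.
Proof.
move=> bv; have /card_gt0P[e] : 0 < deg v by rewrite bad_deg.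
by rewrite inE; exists e.
Qed.

(* Flipping [tiebreak] at a vertex whose colour is not forced by [side] would
   split one more link, contradicting the maximality of [nsplit tiebreak]. *)
Lemma trapped_split v : bad v -> ~~ [exists e, meets_uncut v e] -> ~~ [exists e, free v e] ->
  [exists e, split_link v e].
Proof.
move=> bv no_meets no_free; apply: contraT => /existsPn unsplit.
have same_color e w : linked v e w -> color v = color w.
  move=> vew; apply/eqP/negPn/negP => cvw.
  by have /existsPn/(_ w) := unsplit e; rewrite vew cvw.
have [e0 ve0] := bad_incident bv.
have [w0 vew0] : exists w0, linked v e0 w0.
  apply/existsP; move/existsPn: no_free => /(_ e0).
  by move/existsPn: no_meets => /(_ e0); rewrite /free bv ve0 => -> /=; rewrite negbK.
set t := flip tiebreak v.
have col_v : bad_color t v = ~~ color v.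
  by rewrite /bad_color (negbTE no_meets) (negbTE no_free) /t /flip ffunE eqxx.
have col_u u : u != v -> bad_color t u = color u.
  by move=> uv; rewrite /bad_color /t /flip ffunE (negbTE uv).
have : nsplit tiebreak < nsplit t.
  apply/proper_card/properP; split.
    apply/subsetP => e; rewrite !inE => /existsP[v1 /existsP[w1 /andP[h1 d1]]].
    apply/existsP; exists v1; apply/existsP; exists w1; rewrite h1 /=.
    have [v1v|v1v] := eqVneq v1 v; first by subst v1; rewrite (same_color e w1 h1) eqxx in d1.
    have [w1v|w1v] := eqVneq w1 v.
      by subst w1; have [f hf] := linked_sym h1; rewrite (same_color f v1 hf) eqxx in d1.
    by rewrite !col_u.
  exists e0.
    rewrite inE; apply/existsP; exists v; apply/existsP; exists w0; rewrite vew0 /=.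
    have w0v : w0 != v by case/and5P: vew0.
    by rewrite col_v col_u // (same_color e0 w0 vew0); case: (color w0).
  rewrite inE; apply/negP => /existsP[v1 /existsP[w1 /andP[h1 d1]]].
  have [bv1 v1e] := linked_bad h1.
  case: (incident2P ve0 v1e) => vv; first by subst v1; rewrite (same_color e0 w1 h1) eqxx in d1.
  by move: (other_end_not_bad bv ve0); rewrite -vv bv1.
by rewrite ltnNge nsplit_tiebreak.
Qed.

Definition chosen v : option E :=
  if [pick e | meets_uncut v e] is Some e then Some e
  else if [pick e | free v e] is Some e then Some e
  else [pick e | split_link v e].

Lemma chosen_bad v e : chosen v = Some e -> bad v /\ inc v e.
Proof.
rewrite /chosen; case: pickP => [e1 h1 [<-]|_]; first by case/and3P: h1.
case: pickP => [e2 h2 [<-]|_]; first by case/and4P: h2.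
by case: pickP => [e3 /existsP[w /andP[/linked_bad h3 _]] [<-]|].
Qed.

Lemma chosen_cut v e : chosen v = Some e -> cut e.
Proof. by case/chosen_bad; apply: bad_cut. Qed.

Lemma chosen_other_end_deg v e : chosen v = Some e -> deg (other_end e v) <= 2.
Proof. by case/chosen_bad => bv; apply: deg_other_end_le2 (bad_deg bv). Qed.

Lemma chosen_split v e : chosen v = Some e -> ~~ meets_uncut v e -> ~~ free v e -> split_link v e.
Proof.
rewrite /chosen; case: pickP => [e1 h1 [<-]|_]; first by rewrite h1.
by case: pickP => [e2 h2 [<-]|_]; [rewrite h2 | case: pickP => [e3 h3 [<-]|]].
Qed.

Lemma chosen_exists v : bad v -> exists e, chosen v = Some e.
Proof.
move=> bv; rewrite /chosen; case: pickP => [e1 _|no_meets]; first by exists e1.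
case: pickP => [e2 _|no_free]; first by exists e2.
case: pickP => [e3 _|no_split]; first by exists e3.
have none (P : pred E) : P =1 xpred0 -> ~~ [exists e, P e].
  by move=> P0; apply/existsP => -[e]; rewrite P0.
by have /existsP[e] := trapped_split bv (none _ no_meets) (none _ no_free); rewrite no_split.
Qed.

Lemma color_meets v e : meets_uncut v e -> color v = side v.
Proof.
move=> ve; rewrite /bad_color.
by have -> : [exists e, meets_uncut v e] by apply/existsP; exists e.
Qed.

Lemma color_chosen_free v e : chosen v = Some e -> free v e -> color v = ~~ side v.
Proof.
move=> ch ve; have /and4P[_ _ nm _] := ve.
have no_meets : ~~ [exists e', meets_uncut v e'].
  move: ch; rewrite /chosen; case: pickP => [e1 h1 [e1e]|none _]; first by rewrite -e1e h1 in nm.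
  by apply/existsP => -[e']; rewrite none.
rewrite /bad_color (negbTE no_meets).
by have -> : [exists e', free v e'] by apply/existsP; exists e.
Qed.

Lemma far_edges_cut_not_meets v e g : bad v -> inc v e -> inc (other_end e v) g -> g != e ->
  cut g -> ~~ meets_uncut v e.
Proof.
move=> bv ve xg ge cg; apply/negP => /and3P[_ _ /existsP[k /andP[xk nk]]].
have dx := deg_other_end_le2 (bad_deg bv) ve.
by case: (deg_le2_edges dx xg (incident_other_end ve) ge xk) => kk;
  rewrite kk ?cg ?(bad_cut bv ve) in nk.
Qed.

Lemma far_edges_free v e g : bad v -> inc v e -> inc (other_end e v) g -> g != e ->
  cut g -> ~~ bad (other_end g (other_end e v)) -> free v e.
Proof.
move=> bv ve xg ge cg nb; rewrite /free bv ve (far_edges_cut_not_meets bv ve xg ge cg) /=.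
apply/existsP => -[w /and5P[_ _ bw _ /existsP[k /and3P[ke xk /eqP kw]]]].
have dx := deg_other_end_le2 (bad_deg bv) ve.
case: (deg_le2_edges dx xg (incident_other_end ve) ge xk) => kk; last by rewrite kk eqxx in ke.
by move: nb; rewrite -kk kw bw.
Qed.

Lemma color_free_end v f g a : chosen v = Some f -> a = other_end f v -> inc a g -> g != f ->
  cut g -> ~~ bad (other_end g a) -> color v = side a.
Proof.
move=> ch ao ag gf cg nb; have [bv vf] := chosen_bad ch.
rewrite ao in ag nb *; rewrite (color_chosen_free ch (far_edges_free bv vf ag gf cg nb)).
by rewrite (side_other_end (chosen_cut ch) vf).
Qed.

Definition induced e := ~~ cut e || [exists v, chosen v == Some e].

Definition induced_color e :=
  if [pick v | chosen v == Some e] is Some v then color v else side (ends e).1.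

Lemma inducedP e : induced e -> ~~ cut e \/ exists v, chosen v = Some e.
Proof. by case/orP=> [|/existsP[v /eqP]]; [left | right; exists v]. Qed.

Lemma induced_color_chosen v e : chosen v = Some e -> induced_color e = color v.
Proof.
move=> ch; rewrite /induced_color; case: pickP => [v' /eqP ch'|/(_ v)]; last by rewrite ch eqxx.
have [bv ve] := chosen_bad ch; have [bv' v'e] := chosen_bad ch'.
case: (incident2P ve v'e) => [-> //|v'o].
by move: (other_end_not_bad bv ve); rewrite -v'o bv'.
Qed.

Lemma induced_color_uncut u e : ~~ cut e -> inc u e -> induced_color e = side u.
Proof.
move=> ne ue; rewrite /induced_color; case: pickP => [v /eqP ch|_].
  by rewrite (chosen_cut ch) in ne.
by move: ne ue; rewrite negbK /incident => /eqP se /orP[]/eqP->.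
Qed.

Lemma uncut_chosen_adj u f f' v' : inc u f -> inc u f' -> ~~ cut f -> chosen v' = Some f' ->
  induced_color f != induced_color f'.
Proof.
move=> uf uf' nf ch'; have [bv' v'f'] := chosen_bad ch'.
case: (incident2P v'f' uf') => uv'.
  by move: (uncut_not_bad nf uf); rewrite uv' bv'.
have meets : meets_uncut v' f'.
  by rewrite /meets_uncut bv' v'f'; apply/existsP; exists f; rewrite -uv' uf nf.
rewrite (induced_color_uncut nf uf) (induced_color_chosen ch') (color_meets meets).
by rewrite uv' (side_other_end (chosen_cut ch') v'f'); case: (side v').
Qed.

Lemma chosen_chosen_adj u f f' v v' : inc u f -> inc u f' -> f != f' ->
  chosen v = Some f -> chosen v' = Some f' -> induced_color f != induced_color f'.
Proof.
move=> uf uf' ff' ch ch'; have [bv vf] := chosen_bad ch; have [bv' v'f'] := chosen_bad ch'.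
have vv' : v != v' by apply: contra_neq ff' => vv'; move: ch; rewrite vv' ch' => -[].
case: (incident2P vf uf) => uv; case: (incident2P v'f' uf') => uv'.
- by move: vv'; rewrite -uv -uv' eqxx.
- by move: (other_end_not_bad bv' v'f'); rewrite -uv' uv bv.
- by move: (other_end_not_bad bv vf); rewrite -uv uv' bv'.
have du : deg u <= 2 by rewrite uv; apply: chosen_other_end_deg ch.
have f'v : other_end f' u = v' by rewrite uv' other_endK.
have link : linked v f v'.
  rewrite /linked bv vf bv' eq_sym vv' /=; apply/existsP; exists f'.
  by rewrite eq_sym ff' -uv uf' f'v eqxx.
have nm : ~~ meets_uncut v f.
  by apply: far_edges_cut_not_meets bv vf _ _ (chosen_cut ch'); rewrite -?uv // eq_sym.
have nfr : ~~ free v f by apply/negP => /and4P[_ _ _ /existsP[]]; exists v'.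
have /existsP[w /andP[/and5P[_ _ _ _ /existsP[k /and3P[kf xk /eqP kw]]] cw]] :=
  chosen_split ch nm nfr.
rewrite -uv in xk kw; case: (deg_le2_edges du uf uf' ff' xk) => kk; first by rewrite kk eqxx in kf.
by rewrite (induced_color_chosen ch) (induced_color_chosen ch') -f'v -kk kw.
Qed.

Lemma induced_color_adj u f f' : inc u f -> inc u f' -> f != f' -> induced f -> induced f' ->
  induced_color f != induced_color f'.
Proof.
move=> uf uf' ff' /inducedP[nf|[v ch]] /inducedP[nf'|[v' ch']].
- by rewrite (uncut_matching uf uf' nf nf') eqxx in ff'.
- exact: uncut_chosen_adj uf uf' nf ch'.
- by rewrite eq_sym; apply: uncut_chosen_adj uf' uf nf' ch.
- exact: chosen_chosen_adj uf uf' ff' ch ch'.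
Qed.

Lemma induced_dist2_cut g a b f f' : inc a g -> inc b g -> a != b -> f != g -> f' != g ->
  inc a f -> inc b f' -> induced f -> induced f' -> cut g.
Proof.
move=> ag bg ab fg f'g af bf' If If'; apply: contraT => ng.
have db3 : deg b = 3.
  case: (inducedP If) => [nf|[v ch]]; first by rewrite (uncut_matching af ag nf ng) eqxx in fg.
  have [bv vf] := chosen_bad ch.
  case: (incident2P vf af) => av; first by move: (uncut_not_bad ng ag); rewrite av bv.
  by rewrite (other_end_eq ag bg ab) av; apply: uncut_partner_deg3 bv vf _ ng; rewrite -av.
case: (inducedP If') => [nf'|[v' ch']]; first by rewrite (uncut_matching bf' bg nf' ng) eqxx in f'g.
have [bv' v'f'] := chosen_bad ch'.
case: (incident2P v'f' bf') => bv'b; first by move: (uncut_not_bad ng bg); rewrite bv'b bv'.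
by have := chosen_other_end_deg ch'; rewrite -bv'b db3.
Qed.

Lemma uncut_chosen_dist2 g a b f f' v' : inc a g -> inc b g -> a != b -> f' != g ->
  inc a f -> inc b f' -> cut g -> ~~ cut f -> chosen v' = Some f' ->
  induced_color f != induced_color f'.
Proof.
move=> ag bg ab f'g af bf' cg nf ch'; have [bv' v'f'] := chosen_bad ch'.
have ba : other_end g b = a by rewrite (other_end_eq ag bg ab) other_endK.
have sb : side b = ~~ side a by rewrite (other_end_eq ag bg ab) (side_other_end cg ag).
rewrite (induced_color_uncut nf af) (induced_color_chosen ch').
case: (incident2P v'f' bf') => bv'b.
  have meets : meets_uncut v' g.
    by rewrite /meets_uncut bv' -bv'b bg ba; apply/existsP; exists f; rewrite af nf.
  by rewrite (color_meets meets) -bv'b sb; case: (side a).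
rewrite (color_free_end ch' bv'b bg _ cg) ?ba ?(uncut_not_bad nf af) 1?eq_sym //.
by rewrite sb; case: (side a).
Qed.

Lemma bad_chosen_dist2 g b f f' v v' : inc v g -> inc b g -> v != b -> f' != g -> f != f' ->
  inc b f' -> chosen v = Some f -> chosen v' = Some f' -> b = other_end f' v' ->
  induced_color f != induced_color f'.
Proof.
move=> vg bg vb f'g ff' bf' ch ch' bv'b.
have [bv vf] := chosen_bad ch; have [bv' v'f'] := chosen_bad ch'.
have gb : other_end g b = v by rewrite (other_end_eq vg bg vb) other_endK.
have db : deg b <= 2 by rewrite bv'b; apply: chosen_other_end_deg ch'.
have vv' : v != v' by apply: contra_neq ff' => vv'; move: ch; rewrite vv' ch' => -[].
have nm : ~~ meets_uncut v' f'.
  by apply: far_edges_cut_not_meets bv' v'f' _ _ (bad_cut bv vg); rewrite -?bv'b // eq_sym.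
have link : linked v' f' v.
  rewrite /linked bv' v'f' bv vv' /=; apply/existsP; exists g.
  by rewrite eq_sym f'g -bv'b bg gb eqxx.
have nfr : ~~ free v' f' by apply/negP => /and4P[_ _ _ /existsP[]]; exists v.
have /existsP[w /andP[/and5P[_ _ _ _ /existsP[k /and3P[kf' bk /eqP kw]]] cw]] :=
  chosen_split ch' nm nfr.
rewrite -bv'b in bk kw.
case: (deg_le2_edges db bf' bg f'g bk) => kk; first by rewrite kk eqxx in kf'.
by rewrite (induced_color_chosen ch) (induced_color_chosen ch') eq_sym -gb -kk kw.
Qed.

Lemma induced_color_dist2 g a b f f' : inc a g -> inc b g -> a != b -> f != g -> f' != g ->
  f != f' -> inc a f -> inc b f' -> induced f -> induced f' ->
  induced_color f != induced_color f'.
Proof.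
move=> ag bg ab fg f'g ff' af bf' If If'.
have cg := induced_dist2_cut ag bg ab fg f'g af bf' If If'.
have ba : b != a by rewrite eq_sym.
have bo := other_end_eq ag bg ab; have ao := other_end_eq bg ag ba.
case: (inducedP If) => [nf|[v ch]]; case: (inducedP If') => [nf'|[v' ch']].
- rewrite (induced_color_uncut nf af) (induced_color_uncut nf' bf') bo (side_other_end cg ag).
  by case: (side a).
- exact: uncut_chosen_dist2 ag bg ab f'g af bf' cg nf ch'.
- by rewrite eq_sym; apply: uncut_chosen_dist2 bg ag ba fg bf' af cg nf' ch.
have [bv vf] := chosen_bad ch; have [bv' v'f'] := chosen_bad ch'.
case: (incident2P vf af) => av; case: (incident2P v'f' bf') => bv'b.
- by rewrite av in ag; move: (other_end_not_bad bv ag); rewrite -av -bo bv'b bv'.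
- by rewrite av in ag ab; apply: bad_chosen_dist2 ag bg ab f'g ff' bf' ch ch' bv'b.
- by rewrite eq_sym; rewrite bv'b in bg ba; apply: bad_chosen_dist2 bg ag ba fg _ af ch' ch av;
    rewrite eq_sym.
rewrite (induced_color_chosen ch) (induced_color_chosen ch').
rewrite (color_free_end ch av ag _ cg) -?bo; last 2 first.
- by rewrite eq_sym.
- by rewrite bv'b other_end_not_bad.
rewrite (color_free_end ch' bv'b bg _ cg) -?ao; last 2 first.
- by rewrite eq_sym.
- by rewrite av other_end_not_bad.
by rewrite bo (side_other_end cg ag); case: (side a).
Qed.

Definition matching_part := [set e | ~~ induced e].

Lemma matching_part_cut : {in matching_part, forall e, cut e}.
Proof. by move=> e; rewrite inE negb_or negbK => /andP[]. Qed.

Lemma matching_part_deg u : #|[set e in matching_part | inc u e]| <= 2.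
Proof.
have sub_deg : [set e in matching_part | inc u e] \subset [set e | inc u e].
  by apply/subsetP => e; rewrite !inE => /andP[].
have [lt3|] := ltnP (deg u) 3.
  by rewrite -ltnS; apply: leq_ltn_trans (subset_leq_card sub_deg) _.
rewrite leq_eqVlt ltnNge ends_subcubic orbF eq_sym => /eqP du.
have [e0 [ue0 Ie0]] : exists e0, inc u e0 /\ induced e0.
  case bu: (bad u).
    have [e0 ch] := chosen_exists bu; exists e0; split; first by case: (chosen_bad ch).
    by apply/orP; right; apply/existsP; exists u; rewrite ch.
  move: bu; rewrite /bad /fully_crossed du eqxx /= => /negbT; rewrite negb_forall.
  by case/existsP=> e0; rewrite negb_imply => /andP[ue0 ne0]; exists e0; rewrite /induced ne0.
have : [set e in matching_part | inc u e] \subset [set e | inc u e] :\ e0.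
  apply/subsetP => e; rewrite !inE => /andP[Ie ->]; rewrite andbT.
  by apply: contraNneq Ie => ->.
move/subset_leq_card/leq_trans; apply.
by move: du; rewrite /Defs.deg (cardsD1 e0) inE ue0 add1n => -[->].
Qed.

Lemma packing_exists : exists c : E -> 'I_4, packing_1122 ends c.
Proof.
have [m m_proper] := bipartite_deg2_edge_coloring matching_part_cut matching_part_deg.
pose c e : nat := if induced e then 2 + induced_color e else m e.
have c_lt e : c e < 4 by rewrite /c; case: ifP => _; [case: (induced_color e) | case: (m e)].
exists (fun e => Ordinal (c_lt e)); apply: packing_1122_of_local => [u f f'|g a b f f'] /=.
  move=> uf uf' ff'; rewrite -val_eqE /= /c.
  case If: (induced f); case If': (induced f').
  - move: (induced_color_adj uf uf' ff' If If').
    by case: (induced_color f); case: (induced_color f').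
  - by case: (induced_color f); case: (m f').
  - by case: (induced_color f'); case: (m f).
  - have fM : f \in matching_part by rewrite inE If.
    have f'M : f' \in matching_part by rewrite inE If'.
    by move: (m_proper u f f' fM f'M uf uf' ff'); case: (m f); case: (m f').
move=> ag bg ab fg f'g ff' af bf' /(congr1 val) /=; rewrite /c.
case If: (induced f); last by case: (m f).
case If': (induced f') => cff'; last by move: cff'; case: (induced_color f); case: (m f').
have := induced_color_dist2 ag bg ab fg f'g ff' af bf' If If'.
by move: cff'; case: (induced_color f); case: (induced_color f').
Qed.

End Packing.

Theorem theorem1 (V E : finType) (ends : E -> V * V) :
  loopless ends -> subcubic ends -> three_irregular ends ->
  exists c : E -> 'I_4, packing_1122 ends c.
Proof. exact: packing_exists. Qed.
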